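(* Fix a directed edge set $\mathcal{E}$ and a randomized design with $0<\mathbb{E}[z_i]<1$ for all $i$. Suppose there exist reals $\rho_i\in[0,1)$, $i\in[n]$, such that for every $(k,i)\in\mathcal{E}$, $\mathbb{P}(z_k=1)>0$ and $\mathbb{P}(z_i=1\mid z_k=1)=\rho_i$. Then under the heterogeneous additive network effects model the estimator \[\widehat{\mathrm{ATE}}_{-\alpha}=\frac1n\sum_{i\in[n]}\Big(\frac{z_i}{\mathbb{E}[z_i]}-\frac{(1-z_i)\rho_i}{\mathbb{E}[z_i](1-\rho_i)}\Big)\big(Y_i({\bf z})-\alpha_i\big)\] is unbiased for $\mathrm{ATE}$.
   Context: Population $[n]$; random treatment vector ${\bf z}\in\{0,1\}^n$ drawn from a randomized design. Heterogeneous additive network effects model: $Y_i({\bf z})=\alpha_i+\beta_iz_i+\sum_{k\in[n]}\gamma_{ki}z_k$ with deterministic real parameters, $\gamma_{ki}=0$ unless $(k,i)\in\mathcal{E}$, where $\mathcal{E}$ is a set of ordered pairs $(k,i)$, $k\neq i$; $\alpha_i=Y_i({\bf 0})$. $\mathrm{ATE}=\frac1n\sum_i\beta_i$. (For $i$ with no incoming edges, $\rho_i\in[0,1)$ is arbitrary.) *)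

From HB Require Import structures.
From mathcomp Require Import all_boot all_order all_algebra.
Set Implicit Arguments. Unset Strict Implicit. Unset Printing Implicit Defensive.
Import Order.TTheory GRing.Theory Num.Theory.
Local Open Scope ring_scope.

Definition assign (n : nat) := {ffun 'I_n -> bool}.

Section Defs.
Variables (R : realFieldType) (n : nat).

Definition is_design (p : assign n -> R) : Prop :=
  (forall z, 0 <= p z) /\ \sum_(z : assign n) p z = 1.

Definition Exp (p : assign n -> R) (f : assign n -> R) : R :=
  \sum_(z : assign n) p z * f z.
Definition Prob (p : assign n -> R) (A : pred (assign n)) : R :=
  \sum_(z : assign n | A z) p z.
Definition CondProb (p : assign n -> R) (A B : pred (assign n)) : R :=
  Prob p [pred z | A z && B z] / Prob p B.

Definition zr (z : assign n) (i : 'I_n) : R := (z i)%:R.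

Definition Yout (alpha beta : 'I_n -> R) (gamma : 'I_n -> 'I_n -> R)
  (z : assign n) (i : 'I_n) : R :=
  alpha i + beta i * zr z i + \sum_(k < n) gamma k i * zr z k.

Definition ATE (beta : 'I_n -> R) : R := n%:R^-1 * \sum_(i < n) beta i.

Definition ATE_hat_minus_alpha (p : assign n -> R) (rho alpha beta : 'I_n -> R)
  (gamma : 'I_n -> 'I_n -> R) (z : assign n) : R :=
  n%:R^-1 * \sum_(i < n)
    ((zr z i / Exp p (fun z => zr z i)
      - (1 - zr z i) * rho i / (Exp p (fun z => zr z i) * (1 - rho i)))
     * (Yout alpha beta gamma z i - alpha i)).

End Defs.

Arguments zr {R n} z i.
Arguments Exp {R n} p f.
Arguments Prob {R n} p A.
Arguments CondProb {R n} p A B.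
Arguments is_design {R n} p.
Arguments Yout {R n} alpha beta gamma z i.
Arguments ATE {R n} beta.
Arguments ATE_hat_minus_alpha {R n} p rho alpha beta gamma z.

From HB Require Import structures.
From mathcomp Require Import all_boot all_order all_algebra.
From mathcomp Require Import ring.
Import Order.TTheory GRing.Theory Num.Theory.
Local Open Scope ring_scope.

(* Write pi_i = E[z_i] and w_i(z) for the weight multiplying Y_i(z) - alpha_i,
   so that Y_i(z) - alpha_i = beta_i z_i + sum_k gamma_ki z_k.  Since w_i z_i = z_i / pi_i,
   E[w_i z_i] = 1.  For an edge (k,i), E[w_i z_k] = P(z_i, z_k)/pi_i
   - rho_i P(~z_i, z_k)/(pi_i (1 - rho_i)), and the conditional-probability hypothesis
   gives P(z_i, z_k) = rho_i P(z_k) and P(~z_i, z_k) = (1 - rho_i) P(z_k), so the two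
   terms cancel.  By linearity the estimator has mean (1/n) sum_i beta_i. *)

Section Expectation.
Variables (R : realFieldType) (n : nat) (p : assign n -> R).

Lemma eq_Exp {f g} : f =1 g -> Exp p f = Exp p g.
Proof. by move=> fg; apply: eq_bigr => z _; rewrite fg. Qed.

Lemma ExpD f g : Exp p (fun z => f z + g z) = Exp p f + Exp p g.
Proof. by rewrite /Exp -big_split; apply: eq_bigr => z _; rewrite mulrDr. Qed.

Lemma ExpB f g : Exp p (fun z => f z - g z) = Exp p f - Exp p g.
Proof. by rewrite /Exp -sumrB; apply: eq_bigr => z _; rewrite mulrBr. Qed.

Lemma ExpZ c f : Exp p (fun z => c * f z) = c * Exp p f.
Proof. by rewrite /Exp mulr_sumr; apply: eq_bigr => z _; rewrite mulrCA. Qed.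

Lemma Exp_sum (F : 'I_n -> assign n -> R) :
  Exp p (fun z => \sum_(k < n) F k z) = \sum_(k < n) Exp p (F k).
Proof. by rewrite /Exp exchange_big; apply: eq_bigr => z _; rewrite mulr_sumr. Qed.

Lemma Exp_indicator (A : pred (assign n)) : Exp p (fun z => (A z)%:R) = Prob p A.
Proof.
by rewrite /Prob big_mkcond; apply: eq_bigr => z _; case: (A z); rewrite ?mulr1 ?mulr0.
Qed.

Lemma ProbID (A B : pred (assign n)) :
  Prob p B = Prob p [pred z | A z && B z] + Prob p [pred z | ~~ A z && B z].
Proof.
rewrite /Prob (bigID A) /=.
by congr (_ + _); apply: eq_bigl => z; rewrite andbC.
Qed.

Lemma CondProb_joint {A B : pred (assign n)} {r : R} :
  Prob p B != 0 -> CondProb p A B = r ->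
  Prob p [pred z | A z && B z] = r * Prob p B.
Proof. by rewrite /CondProb => PB0 <-; rewrite divfK. Qed.

Lemma CondProb_joint_compl {A B : pred (assign n)} {r : R} :
  Prob p B != 0 -> CondProb p A B = r ->
  Prob p [pred z | ~~ A z && B z] = (1 - r) * Prob p B.
Proof.
move=> PB0 condAB; have PAB := CondProb_joint PB0 condAB.
by rewrite mulrBl mul1r -PAB (ProbID A B) addrAC subrr add0r.
Qed.

End Expectation.

Arguments eq_Exp {R n p f g}.
Arguments CondProb_joint {R n p A B r}.
Arguments CondProb_joint_compl {R n p A B r}.

Section Weight.
Variable R : realFieldType.

Definition ipw_weight (pi r : R) (b : bool) : R :=
  b%:R / pi - (1 - b%:R) * r / (pi * (1 - r)).

Lemma ipw_weight_mul_self pi r b : ipw_weight pi r b * b%:R = pi^-1 * b%:R.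
Proof. by case: b; rewrite /ipw_weight /=; ring. Qed.

Lemma ATE_hat_minus_alphaE n (p : assign n -> R) rho alpha beta gamma z :
  ATE_hat_minus_alpha p rho alpha beta gamma z =
  n%:R^-1 * \sum_(i < n) ipw_weight (Exp p (fun z => zr z i)) (rho i) (z i) *
                         (beta i * zr z i + \sum_(k < n) gamma k i * zr z k).
Proof. by congr (_ * _); apply: eq_bigr => i _; rewrite /Yout /ipw_weight; ring. Qed.

Variables (n : nat) (p : assign n -> R).

Lemma Exp_ipw_weight_self i r :
  Exp p (fun z => zr z i) != 0 ->
  Exp p (fun z => ipw_weight (Exp p (fun z => zr z i)) r (z i) * zr z i) = 1.
Proof.
move=> pi0; rewrite (eq_Exp (fun z => ipw_weight_mul_self _ r (z i))).
by rewrite ExpZ mulVf.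
Qed.

Lemma Exp_ipw_weight_cond (pi r : R) i k :
  r != 1 -> Prob p (fun z => z k) != 0 ->
  CondProb p (fun z => z i) (fun z => z k) = r ->
  Exp p (fun z => ipw_weight pi r (z i) * zr z k) = 0.
Proof.
move=> r1 Pk0 condik; set c := r / (pi * (1 - r)).
have -> : Exp p (fun z => ipw_weight pi r (z i) * zr z k) =
    pi^-1 * Prob p [pred z : assign n | z i && z k]
    - c * Prob p [pred z : assign n | ~~ z i && z k].
  rewrite -!Exp_indicator -!ExpZ -ExpB; apply: eq_Exp => z.
  by rewrite /ipw_weight /zr /c /=; case: (z i); case: (z k) => /=; ring.
rewrite (CondProb_joint Pk0 condik) (CondProb_joint_compl Pk0 condik).
have cE : c * (1 - r) = pi^-1 * r.
  by rewrite /c invfM mulrA divfK; [exact: mulrC | rewrite subr_eq0 eq_sym].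
by rewrite !mulrA cE subrr.
Qed.

End Weight.

Arguments ipw_weight {R} pi r b.
Arguments ATE_hat_minus_alphaE {R n} p rho alpha beta gamma z.
Arguments Exp_ipw_weight_cond {R n p pi r i k}.

Theorem theorem4 (R : realFieldType) (n : nat) (E : rel 'I_n)
  (p : assign n -> R) (rho alpha beta : 'I_n -> R) (gamma : 'I_n -> 'I_n -> R) :
  (* E is a set of ordered pairs (k,i) with k <> i *)
  (forall k i, E k i -> k != i) ->
  is_design p ->
  (forall i, 0 < Exp p (fun z => zr z i) < 1) ->
  (forall i, 0 <= rho i < 1) ->
  (forall k i, E k i ->
     0 < Prob p (fun z => z k) /\
     CondProb p (fun z => z i) (fun z => z k) = rho i) ->
  (* network effects supported on E *)
  (forall k i, ~~ E k i -> gamma k i = 0) ->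
  Exp p (ATE_hat_minus_alpha p rho alpha beta gamma) = ATE beta.
Proof.
move=> _ _ pi_bounds rho_bounds edge_cond gamma_E.
rewrite (eq_Exp (ATE_hat_minus_alphaE p rho alpha beta gamma)) ExpZ Exp_sum.
congr (_ * _); apply: eq_bigr => i _.
have pi0 : Exp p (fun z => zr z i) != 0.
  by case/andP: (pi_bounds i) => /lt0r_neq0.
have rho1 : rho i != 1 by case/andP: (rho_bounds i) => _ rho_lt1; rewrite lt_eqF.
rewrite (eq_Exp (fun z => mulrDr _ _ _)) ExpD.
rewrite (eq_Exp (fun z => mulrCA _ _ _)) ExpZ Exp_ipw_weight_self // mulr1.
rewrite (eq_Exp (fun z => mulr_sumr _ _ _ _)) Exp_sum big1 ?addr0 // => k _.
rewrite (eq_Exp (fun z => mulrCA _ _ _)) ExpZ.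
have [Eki | nEki] := boolP (E k i); last by rewrite gamma_E // mul0r.
have [Pk_gt0 condik] := edge_cond k i Eki.
by rewrite (Exp_ipw_weight_cond rho1 (lt0r_neq0 Pk_gt0) condik) mulr0.
Qed.
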